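(* If $T$ and $T'$ are proper caterpillars with $\Phi(T)=\Phi(T')$, then $T$ and $T'$ are isomorphic. In other words, the map $\Phi$ from (isomorphism classes of) proper caterpillars to reverse-classes of integer compositions is one-to-one.
   Context: A composition is a finite nonempty sequence $\beta=\beta_1\beta_2\cdots\beta_k$ of positive integers; its reverse is $\beta_k\cdots\beta_2\beta_1$, and its reverse-class is $[\beta]^*=\{\beta,\text{reverse of }\beta\}$. A caterpillar is a tree in which the subgraph induced by the internal (non-leaf) vertices is a non-trivial path (the spine); it is proper if every internal vertex is adjacent to at least one leaf. For a proper caterpillar $T$ with spine $v_1v_2\cdots v_k$ (consecutive vertices adjacent), let $L(T)$ be the set of edges not on the spine and let $\beta_i$ be the number of vertices of the connected component of $(V(T),L(T))$ containing $v_i$ (i.e. $1$ plus the number of leaves adjacent to $v_i$). Define $\Phi(T)=[\beta_1\beta_2\cdots\beta_k]^*$. *)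

From mathcomp Require Import all_boot.
Set Implicit Arguments. Unset Strict Implicit. Unset Printing Implicit Defensive.

Section Caterpillar.
Variables (T : finType) (e : rel T).

Definition simple_graph : Prop := symmetric e /\ irreflexive e.

Definition connected : Prop := forall x y : T, connect e x y.

Definition acyclic : Prop :=
  forall (x : T) (p : seq T),
    path e x p -> uniq (x :: p) -> 2 <= size p -> ~~ e (last x p) x.

Definition is_tree : Prop := simple_graph /\ connected /\ acyclic.

Definition degree (v : T) : nat := #|[set w | e v w]|.
Definition leaf (v : T) : bool := degree v == 1.
Definition internal (v : T) : bool := ~~ leaf v.

(* s = v_1 ... v_k is a spine: the subgraph induced by the internal
   vertices is the (non-empty) path v_1 v_2 ... v_k, i.e. the internal
   vertices are exactly the (distinct) v_i, and v_i, v_j are adjacent iff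
   |i - j| = 1. *)
Definition is_spine (s : seq T) : Prop :=
  [/\ s != [::], uniq s, (forall v, (v \in s) = internal v) &
      (forall (x0 : T) (i j : nat), i < size s -> j < size s ->
         e (nth x0 s i) (nth x0 s j) = (i.+1 == j) || (j.+1 == i))].

Definition is_caterpillar : Prop := is_tree /\ exists s, is_spine s.

Definition is_proper_caterpillar : Prop :=
  is_caterpillar /\ forall v, internal v -> exists2 w, e v w & leaf w.

Definition spine_edge (s : seq T) (x y : T) : bool :=
  ((x, y) \in zip s (behead s)) || ((y, x) \in zip s (behead s)).

Definition nonspine_rel (s : seq T) : rel T :=
  fun x y => e x y && ~~ spine_edge s x y.

Definition spine_composition (s : seq T) : seq nat :=
  map (fun v => #|[set w | connect (nonspine_rel s) v w]|) s.
End Caterpillar.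

Definition revclass (b : seq nat) : pred (seq nat) :=
  fun c => (c == b) || (c == rev b).

Definition graph_iso (T T' : finType) (e : rel T) (e' : rel T') : Prop :=
  exists f : T -> T', bijective f /\ forall x y, e' (f x) (f y) = e x y.

(* Give every vertex of a caterpillar with spine v_1 ... v_k the coordinates
   (i, 0) if it is v_i and (i, j) if it is the j-th leaf hanging at v_i.
   Adjacency is then a fixed relation on coordinates, and the set of
   coordinates in use is determined by the numbers of leaves at the v_i,
   i.e. by the composition beta_i - 1.  Two caterpillars with the same
   composition, read along suitably oriented spines, are thus isomorphic
   through their coordinates. *)
From mathcomp Require Import all_boot.
From mathcomp Require Import zify.
Set Implicit Arguments. Unset Strict Implicit. Unset Printing Implicit Defensive.

Lemma mem_zip (A B : eqType) (s : seq A) (t : seq B) a b :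
  (a, b) \in zip s t -> (a \in s) && (b \in t).
Proof.
elim: s t => [|x s IH] [|y t] //=; rewrite inE.
case/orP=> [/eqP[-> ->] | /IH/andP[a_s b_t]]; first by rewrite eqxx mem_head.
by rewrite a_s inE b_t !orbT.
Qed.

Lemma mem_zip_behead (A : eqType) (x0 : A) s i : i.+1 < size s ->
  (nth x0 s i, nth x0 s i.+1) \in zip s (behead s).
Proof.
elim: s i => // a [|b r] IH [|i] //= lt_i; first by rewrite mem_head.
by rewrite inE IH ?orbT.
Qed.

Lemma graph_iso_of_coords (T T' : finType) (C : eqType) (e : rel T) (e' : rel T')
    (R : rel C) (c : T -> C) (c' : T' -> C) :
  injective c -> injective c' -> codom c =i codom c' ->
  (forall x y, e x y = R (c x) (c y)) -> (forall x y, e' x y = R (c' x) (c' y)) ->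
  graph_iso e e'.
Proof.
move=> c_inj c'_inj eq_codom eE e'E.
have cT x : c x \in codom c' by rewrite -eq_codom codom_f.
have c'T y : c' y \in codom c by rewrite eq_codom codom_f.
exists (fun x => iinv (cT x)); split.
  by exists (fun y => iinv (c'T y)) => [x|y]; [apply: c_inj | apply: c'_inj];
    rewrite !f_iinv.
by move=> x y; rewrite e'E eE !f_iinv.
Qed.

Lemma leafP (T : finType) (e : rel T) x :
  leaf e x -> exists u, forall w, e x w = (w == u).
Proof.
by case/cards1P=> u Hu; exists u => w; rewrite -in_set1 -Hu inE.
Qed.

Definition pendants (T : finType) (e : rel T) (v : T) : seq T :=
  [seq w <- enum T | e v w && leaf e w].

Definition leaf_counts (T : finType) (e : rel T) (s : seq T) : seq nat :=
  [seq size (pendants e v) | v <- s].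

Definition spine_coord (T : finType) (e : rel T) (s : seq T) (x : T) : nat * nat :=
  if x \in s then (index x s, 0)
  else let i := find (e x) s in (i, (index x (pendants e (nth x s i))).+1).

Definition coord_adj (a b : nat * nat) : bool :=
  (a.2 == 0) && (b.2 == 0) && ((a.1.+1 == b.1) || (b.1.+1 == a.1))
  || (a.1 == b.1) && ((a.2 == 0) != (b.2 == 0)).

Lemma mem_pendants (T : finType) (e : rel T) v w :
  (w \in pendants e v) = e v w && leaf e w.
Proof. by rewrite mem_filter mem_enum andbT. Qed.

Lemma uniq_pendants (T : finType) (e : rel T) v : uniq (pendants e v).
Proof. by rewrite filter_uniq ?enum_uniq. Qed.

Lemma leaf_counts_rev (T : finType) (e : rel T) (s : seq T) :
  leaf_counts e (rev s) = rev (leaf_counts e s).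
Proof. exact: map_rev. Qed.

Lemma spine_rev (T : finType) (e : rel T) (s : seq T) :
  is_spine e s -> is_spine e (rev s).
Proof.
case=> s_nil s_uniq s_int s_adj; split.
- by rewrite -size_eq0 size_rev size_eq0.
- by rewrite rev_uniq.
- by move=> v; rewrite mem_rev.
move=> x0 i j; rewrite size_rev => lt_i lt_j.
by rewrite !nth_rev // s_adj; lia.
Qed.

Section SpineCoordinates.
Variables (T : finType) (e : rel T) (s : seq T).
Hypotheses (e_sym : symmetric e) (e_conn : connected e) (s_spine : is_spine e s).

Lemma spine_uniq : uniq s.
Proof. by case: s_spine. Qed.

Lemma notin_spine x : (x \notin s) = leaf e x.
Proof. by case: s_spine => _ _ s_int _; rewrite s_int negbK. Qed.

Lemma spine_adj x0 i j : i < size s -> j < size s ->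
  e (nth x0 s i) (nth x0 s j) = (i.+1 == j) || (j.+1 == i).
Proof. by case: s_spine => _ _ _; apply. Qed.

Lemma spine_witness : {v | v \in s}.
Proof.
by case: s_spine; case: (s) => // v r _ _ _ _; exists v; rewrite mem_head.
Qed.

(* If the only neighbour u of a leaf x were a leaf too, then {x, u} would be a
   whole connected component, missing the spine. *)
Lemma leaf_spine_nbr x :
  x \notin s -> exists2 u, u \in s & forall w, e x w = (w == u).
Proof.
move=> xNs; have [u xE] : exists u, forall w, e x w = (w == u).
  by apply: leafP; rewrite -notin_spine.
exists u => //; apply/negPn/negP=> uNs.
have [u' uE] : exists u', forall w, e u w = (w == u').
  by apply: leafP; rewrite -notin_spine.
have u'x : u' = x by apply/eqP; rewrite eq_sym -uE e_sym xE eqxx.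
rewrite {}u'x in uE.
have out_xu z w : e z w -> z \in pred2 x u -> w \in pred2 x u.
  move=> ezw; rewrite !inE => /orP[] /eqP zE; move: ezw;
    by rewrite zE ?xE ?uE => /eqP ->; rewrite eqxx ?orbT.
have closed_xu : closed e (pred2 x u).
  by move=> z w ezw; apply/idP/idP; apply: out_xu; rewrite // e_sym.
have [v vs] := spine_witness.
have := closed_connect closed_xu (e_conn x v); rewrite !inE eqxx /=.
by case/esym/orP=> /eqP vE; [rewrite -vE vs in xNs | rewrite -vE vs in uNs].
Qed.

Variant spine_coord_spec x : nat * nat -> bool -> Prop :=
  | SpineCoordSpine of x \in s : spine_coord_spec x (index x s, 0) true
  | SpineCoordLeaf u of x \notin s & u \in s & (forall w, e x w = (w == u)) :
      spine_coord_spec x (index u s, (index x (pendants e u)).+1) false.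

Lemma spine_coordP x : spine_coord_spec x (spine_coord e s x) (x \in s).
Proof.
rewrite /spine_coord; case: ifPn => [xs | xNs]; first exact: SpineCoordSpine.
have [u us xE] := leaf_spine_nbr xNs.
have -> : find (e x) s = index u s by apply: eq_find => w; rewrite xE.
by rewrite nth_index //; apply: SpineCoordLeaf.
Qed.

Lemma pendant_of_nbr x u : x \notin s -> (forall w, e x w = (w == u)) ->
  x \in pendants e u.
Proof. by move=> xNs xE; rewrite mem_pendants e_sym xE eqxx -notin_spine. Qed.

Lemma spine_coord_inj : injective (spine_coord e s).
Proof.
move=> x y; case: spine_coordP => [xs | u xNs us xE];
  case: spine_coordP => [ys | v yNs vs yE] //; first by case; apply: (index_inj x).
case=> /(index_inj u us vs) uv; rewrite -{}uv in yE *.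
by apply: (index_inj x); apply: pendant_of_nbr.
Qed.

Lemma spine_coord_adj x y :
  e x y = coord_adj (spine_coord e s x) (spine_coord e s y).
Proof.
have index_eq u v : u \in s -> v \in s -> (index u s == index v s) = (u == v).
  by move=> us vs; rewrite (inj_in_eq (@index_inj _ u s)).
case: spine_coordP => [xs | u xNs us xE];
  case: spine_coordP => [ys | v yNs vs yE]; rewrite /coord_adj /=.
- rewrite andbF orbF -{1}(nth_index x xs) -{1}(nth_index x ys).
  by rewrite spine_adj ?index_mem.
- by rewrite e_sym yE index_eq // andbT.
- by rewrite xE index_eq // eq_sym andbT.
- by rewrite xE andbF; apply: contraNF yNs => /eqP ->.
Qed.

Lemma mem_codom_spine_coord z : (z \in codom (spine_coord e s)) =
  (z.1 < size s) && (z.2 <= nth 0 (leaf_counts e s) z.1).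
Proof.
have [v0 _] := spine_witness.
have countsE u : u \in s -> nth 0 (leaf_counts e s) (index u s) = size (pendants e u).
  by move=> us; rewrite (nth_map u) ?index_mem // nth_index.
apply/codomP/andP => [[x ->] | [lt_i]].
  case: spine_coordP => [xs | u xNs us xE] /=; rewrite index_mem //; split=> //.
  by rewrite countsE // index_mem pendant_of_nbr.
case: z lt_i => i j /= lt_i; set u := nth v0 s i.
have us : u \in s by exact: mem_nth.
rewrite -(index_uniq v0 lt_i spine_uniq) -/u countsE //.
case: j => [_ | m lt_m]; first by exists u; move: us; case: spine_coordP.
set x := nth v0 (pendants e u) m.
have : x \in pendants e u by exact: mem_nth.
rewrite mem_pendants -notin_spine => /andP[ux xNs]; exists x.
move: xNs; case: spine_coordP => // w _ ws xE _.
have -> : w = u by apply/eqP; rewrite eq_sym -xE e_sym.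
by rewrite (index_uniq v0 lt_m) ?uniq_pendants.
Qed.

Lemma spine_edgeE x y : e x y -> spine_edge s x y = (x \in s) && (y \in s).
Proof.
move=> exy; apply/idP/andP => [|[xs ys]].
  by case/orP=> /mem_zip/andP[? /mem_behead ?].
move: exy; rewrite -(nth_index x xs) -(nth_index x ys) spine_adj ?index_mem //.
by case/orP=> /eqP idxE; rewrite /spine_edge -idxE mem_zip_behead ?orbT // idxE index_mem.
Qed.

Lemma nonspine_relE x y :
  nonspine_rel e s x y = e x y && ((x \notin s) || (y \notin s)).
Proof.
by rewrite /nonspine_rel; case exy: (e x y) => //=; rewrite spine_edgeE // negb_and.
Qed.

Lemma card_nonspine_component v : v \in s ->
  #|[set w | connect (nonspine_rel e s) v w]| = (size (pendants e v)).+1.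
Proof.
move=> vs.
have out_v z w : nonspine_rel e s z w -> z \in v :: pendants e v -> w \in v :: pendants e v.
  rewrite nonspine_relE !inE !mem_pendants => /andP[ezw zwNs] /orP[/eqP zv | /andP[vz]].
    by move: ezw zwNs; rewrite zv vs -notin_spine => -> /= ->; rewrite orbT.
  rewrite -notin_spine => /leaf_spine_nbr[u _ zE].
  by move: ezw vz; rewrite zE e_sym zE => /eqP-> /eqP->; rewrite eqxx.
have closed_comp : closed (nonspine_rel e s) (v :: pendants e v).
  move=> z w zw; apply/idP/idP; apply: out_v => //.
  by move: zw; rewrite !nonspine_relE e_sym orbC.
have /card_uniqP/= <- : uniq (v :: pendants e v).
  by rewrite /= uniq_pendants mem_pendants -notin_spine vs andbF.
apply: eq_card => w; rewrite inE; apply/idP/idP => [vw | ].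
  by rewrite -(closed_connect closed_comp vw) mem_head.
rewrite inE mem_pendants -notin_spine => /orP[/eqP -> | /andP[vw wNs]].
  exact: connect0.
by apply: connect1; rewrite nonspine_relE vw wNs orbT.
Qed.

Lemma spine_composition_leaf_counts :
  spine_composition e s = map succn (leaf_counts e s).
Proof. by rewrite -map_comp; apply/eq_in_map => v; apply: card_nonspine_component. Qed.

End SpineCoordinates.

Lemma graph_iso_of_leaf_counts (T T' : finType) (e : rel T) (e' : rel T')
    (s : seq T) (s' : seq T') :
  symmetric e -> connected e -> is_spine e s ->
  symmetric e' -> connected e' -> is_spine e' s' ->
  leaf_counts e s = leaf_counts e' s' -> graph_iso e e'.
Proof.
move=> e_sym e_conn s_spine e'_sym e'_conn s'_spine eq_counts.
have eq_size : size s = size s' by have := congr1 size eq_counts; rewrite !size_map.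
apply: (graph_iso_of_coords (spine_coord_inj e_sym e_conn s_spine)
  (spine_coord_inj e'_sym e'_conn s'_spine) _ (spine_coord_adj e_sym e_conn s_spine)
  (spine_coord_adj e'_sym e'_conn s'_spine)).
by move=> z; rewrite !mem_codom_spine_coord // eq_size eq_counts.
Qed.

Theorem lemma2p2 (T T' : finType) (e : rel T) (e' : rel T')
  (s : seq T) (s' : seq T') :
  is_proper_caterpillar e -> is_proper_caterpillar e' ->
  is_spine e s -> is_spine e' s' ->
  revclass (spine_composition e s) =i revclass (spine_composition e' s') ->
  graph_iso e e'.
Proof.
move=> [[[[e_sym _] [e_conn _]] _] _] [[[[e'_sym _] [e'_conn _]] _] _] s_spine s'_spine.
move=> /(_ (spine_composition e s)); rewrite -!topredE /revclass /= eqxx /= => /esym.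
rewrite !spine_composition_leaf_counts // -map_rev -leaf_counts_rev.
case/orP=> /eqP/(inj_map succn_inj) eq_counts.
  exact: graph_iso_of_leaf_counts eq_counts.
exact: graph_iso_of_leaf_counts (spine_rev s'_spine) eq_counts.
Qed.
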